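(* Let $P$ be an ergodic transition matrix on a finite set $\mathcal{X}$ with stationary distribution $\pi$. For all integers $r,s\ge 1$, $$\big\|(P^\star-\Pi)^{r+s}(P-\Pi)^{r+s}\big\|_\pi\le \big\|(P^\star-\Pi)^{r}(P-\Pi)^{r}\big\|_\pi\,\big\|(P^\star-\Pi)^{s}(P-\Pi)^{s}\big\|_\pi .$$
   Context: $P$ is row-stochastic on finite $\mathcal{X}$, ergodic (primitive), with unique stationary distribution $\pi>0$. $\ell_2(\pi)$ is $\mathbb{R}^{\mathcal{X}}$ with $\langle f,g\rangle_\pi=\sum_x f(x)g(x)\pi(x)$; matrices act on functions by $f\mapsto Af$ and $\|A\|_\pi=\sup_{\|f\|_\pi=1}\|Af\|_\pi$. $P^\star(x,x')=\pi(x')P(x',x)/\pi(x)$ is the adjoint of $P$ in $\ell_2(\pi)$, and $\Pi=\mathbf{1}^\intercal\pi$ (all rows equal $\pi$). *)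

From HB Require Import structures.
From mathcomp Require Import all_boot all_order all_algebra.
From mathcomp Require Import boolp classical_sets reals.
Set Implicit Arguments. Unset Strict Implicit. Unset Printing Implicit Defensive.
Import Order.TTheory GRing.Theory Num.Theory.
Local Open Scope ring_scope.
Local Open Scope classical_set_scope.

Section Defs.
Variables (R : realType) (n : nat).

Definition mxpow (A : 'M[R]_n) (k : nat) : 'M[R]_n := iter k (mulmx A) 1%:M.

Definition row_stochastic (P : 'M[R]_n) : Prop :=
  (forall i j, 0 <= P i j) /\ (forall i, \sum_j P i j = 1).

(* ergodic = primitive: some power has all entries positive *)
Definition primitive (P : 'M[R]_n) : Prop :=
  exists k : nat, forall i j, 0 < mxpow P k i j.

Definition stationary_distribution (P : 'M[R]_n) (pi : 'rV[R]_n) : Prop :=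
  (forall i, 0 <= pi 0 i) /\ \sum_i pi 0 i = 1 /\ pi *m P = pi.

Definition adjoint (P : 'M[R]_n) (pi : 'rV[R]_n) : 'M[R]_n :=
  \matrix_(x, x') (pi 0 x' * P x' x / pi 0 x).

Definition Pimx (pi : 'rV[R]_n) : 'M[R]_n := \matrix_(x, x') pi 0 x'.

Definition norm_pi (pi : 'rV[R]_n) (f : 'cV[R]_n) : R :=
  Num.sqrt (\sum_x f x 0 ^+ 2 * pi 0 x).

Definition opnorm_pi (pi : 'rV[R]_n) (A : 'M[R]_n) : R :=
  sup [set norm_pi pi (A *m f) | f in [set f : 'cV[R]_n | norm_pi pi f = 1]].

End Defs.

From HB Require Import structures.
From mathcomp Require Import all_boot all_order all_algebra.
From mathcomp Require Import boolp classical_sets reals.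
From mathcomp Require Import ring lra.
Import Order.TTheory GRing.Theory Num.Theory.
Local Open Scope ring_scope.

(* P^* - Pi is the l2(pi)-adjoint of P - Pi, hence (P^* - Pi)^k is the adjoint
   of (P - Pi)^k.  By the C*-identity ||B^* B|| = ||B||^2 the claim becomes
   ||(P - Pi)^(r+s)||^2 <= ||(P - Pi)^r||^2 ||(P - Pi)^s||^2, which is the
   submultiplicativity of the operator norm. *)

Section MatrixPower.
Variables (R : realType) (n : nat).

Lemma mxpowD (A : 'M[R]_n) k l : mxpow A (k + l) = mxpow A k *m mxpow A l.
Proof.
elim: k => [|k IH]; first by rewrite add0n /mxpow /= mul1mx.
by rewrite addSn /mxpow /= -/(mxpow A (k + l)) IH mulmxA.
Qed.

Lemma mxpowSr (A : 'M[R]_n) k : mxpow A k.+1 = mxpow A k *m A.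
Proof. by rewrite -addn1 mxpowD /mxpow /= mulmx1. Qed.

End MatrixPower.

Section WeightedL2.
Variables (R : realType) (n : nat) (pi : 'rV[R]_n).
Hypothesis pi_gt0 : forall x, 0 < pi 0 x.

Definition dot_pi (f g : 'cV[R]_n) : R := \sum_x f x 0 * g x 0 * pi 0 x.

Definition pi_adjoint (B Bs : 'M[R]_n) : Prop :=
  forall f g, dot_pi (B *m f) g = dot_pi f (Bs *m g).

Lemma sqr_mul_pi_ge0 (a : R) x : 0 <= a * a * pi 0 x.
Proof. by rewrite -expr2 mulr_ge0 ?sqr_ge0 ?ltW. Qed.

Lemma dot_pi_ge0 f : 0 <= dot_pi f f.
Proof. by apply: sumr_ge0 => x _; apply: sqr_mul_pi_ge0. Qed.

Lemma dot_piC f g : dot_pi f g = dot_pi g f.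
Proof. by apply: eq_bigr => x _; rewrite (mulrC (f x 0)). Qed.

Lemma dot_piZr c f g : dot_pi f (c *: g) = c * dot_pi f g.
Proof. rewrite /dot_pi mulr_sumr; apply: eq_bigr => x _; rewrite mxE; ring. Qed.

Lemma dot_piZl c f g : dot_pi (c *: f) g = c * dot_pi f g.
Proof. by rewrite dot_piC dot_piZr dot_piC. Qed.

Lemma norm_piE f : norm_pi pi f = Num.sqrt (dot_pi f f).
Proof. by congr Num.sqrt; apply: eq_bigr => x _; rewrite expr2. Qed.

Lemma norm_pi_ge0 f : 0 <= norm_pi pi f.
Proof. exact: sqrtr_ge0. Qed.

Lemma sqr_norm_pi f : norm_pi pi f ^+ 2 = dot_pi f f.
Proof. by rewrite norm_piE sqr_sqrtr // dot_pi_ge0. Qed.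

Lemma norm_pi_eq0 f : norm_pi pi f = 0 -> f = 0.
Proof.
move=> f0; have /eqP : dot_pi f f = 0 by rewrite -sqr_norm_pi f0 expr0n.
rewrite psumr_eq0; last by move=> x _; apply: sqr_mul_pi_ge0.
move=> /allP fx0; apply/matrixP => x j; rewrite (ord1 j) mxE.
move: (fx0 x (mem_index_enum _)) => /=.
by rewrite !mulf_eq0 (gt_eqF (pi_gt0 x)) orbF orbb => /eqP.
Qed.

Lemma norm_piZ c f : norm_pi pi (c *: f) = `|c| * norm_pi pi f.
Proof.
by rewrite !norm_piE dot_piZr dot_piZl mulrA -expr2 sqrtrM ?sqr_ge0 // sqrtr_sqr.
Qed.

Lemma dot_pi_le_norm f g : dot_pi f g <= norm_pi pi f * norm_pi pi g.
Proof.
set a := norm_pi pi f; set b := norm_pi pi g.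
have [a0|a_neq0] := eqVneq a 0.
  by rewrite a0 mul0r (norm_pi_eq0 _ a0) /dot_pi big1 // => x _; rewrite mxE !mul0r.
have [b0|b_neq0] := eqVneq b 0.
  by rewrite b0 mulr0 (norm_pi_eq0 _ b0) /dot_pi big1 // => x _; rewrite mxE mulr0 mul0r.
have ab_gt0 : 0 < a * b by rewrite mulr_gt0 // lt0r ?a_neq0 ?b_neq0 ?norm_pi_ge0.
have : 0 <= dot_pi (b *: f - a *: g) (b *: f - a *: g) by apply: dot_pi_ge0.
have -> : dot_pi (b *: f - a *: g) (b *: f - a *: g) =
    b ^+ 2 * dot_pi f f - 2 * a * b * dot_pi f g + a ^+ 2 * dot_pi g g.
  rewrite /dot_pi !mulr_sumr -sumrB -big_split /=.
  by apply: eq_bigr => x _; rewrite !mxE; ring.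
rewrite -!sqr_norm_pi -/a -/b => expand_ge0.
rewrite -(ler_pM2l (mulr_gt0 (ltr0n R 2) ab_gt0)) -subr_ge0.
suff -> : 2 * (a * b) * (a * b) - 2 * (a * b) * dot_pi f g =
    b ^+ 2 * a ^+ 2 - 2 * a * b * dot_pi f g + a ^+ 2 * b ^+ 2 by [].
by rewrite /a /b; ring.
Qed.

Hypothesis pi_sum1 : \sum_x pi 0 x = 1.

Lemma norm_pi_const1 : norm_pi pi (const_mx 1) = 1.
Proof.
rewrite norm_piE -[RHS]sqrtr1 -[in RHS]pi_sum1; congr Num.sqrt.
by apply: eq_bigr => x _; rewrite !mxE !mul1r.
Qed.

Lemma norm_pi1_coord_le f y : norm_pi pi f = 1 -> `|f y 0| <= 1 + (pi 0 y)^-1.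
Proof.
move=> f1; have ff1 : dot_pi f f = 1 by rewrite -sqr_norm_pi f1 expr1n.
have fy_pi_le1 : f y 0 * f y 0 * pi 0 y <= 1.
  rewrite -ff1 /dot_pi (bigD1 y) //= lerDl.
  by apply: sumr_ge0 => x _; apply: sqr_mul_pi_ge0.
have fy_le : `|f y 0| * `|f y 0| <= (pi 0 y)^-1.
  by rewrite -normrM ger0_norm -?expr2 ?sqr_ge0 // expr2 -[_^-1]mul1r ler_pdivlMr.
have : `|f y 0| <= 1 + `|f y 0| * `|f y 0| by nra.
lra.
Qed.

Lemma norm_pi_mulmx_bounded A :
  exists C, forall f, norm_pi pi f = 1 -> norm_pi pi (A *m f) <= C.
Proof.
pose K x := \sum_y `|A x y| * (1 + (pi 0 y)^-1).
exists (1 + \sum_x K x * K x * pi 0 x) => f f1.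
have Af_le x : `|(A *m f) x 0| <= K x.
  rewrite mxE; apply: le_trans (ler_norm_sum _ _ _) _.
  by apply: ler_sum => y _; rewrite normrM ler_wpM2l ?norm_pi1_coord_le.
have dot_le : dot_pi (A *m f) (A *m f) <= \sum_x K x * K x * pi 0 x.
  apply: ler_sum => x _; apply: ler_wpM2r; first exact: ltW.
  by move: (Af_le x); rewrite ler_norml => /andP[lo hi]; nra.
have := sqr_norm_pi (A *m f); set t := norm_pi pi (A *m f) => t_sqr.
have : t <= 1 + t ^+ 2 by nra.
lra.
Qed.

Lemma opnorm_pi_ub A f : norm_pi pi f = 1 -> norm_pi pi (A *m f) <= opnorm_pi pi A.
Proof.
move=> f1; apply: ub_le_sup; last by exists f.
have [C AC] := norm_pi_mulmx_bounded A.
by exists C => _ [g g1 <-]; apply: AC.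
Qed.

Lemma opnorm_pi_ge0 A : 0 <= opnorm_pi pi A.
Proof. exact: le_trans (norm_pi_ge0 _) (opnorm_pi_ub A _ norm_pi_const1). Qed.

Lemma opnorm_pi_le A c :
  (forall f, norm_pi pi f = 1 -> norm_pi pi (A *m f) <= c) -> opnorm_pi pi A <= c.
Proof.
move=> Ac; apply: ge_sup; first by exists (norm_pi pi (A *m const_mx 1)), (const_mx 1);
  [exact: norm_pi_const1|].
by move=> _ [g g1 <-]; apply: Ac.
Qed.

Lemma norm_pi_mulmx_le A g : norm_pi pi (A *m g) <= opnorm_pi pi A * norm_pi pi g.
Proof.
have [g0|g_neq0] := eqVneq (norm_pi pi g) 0.
  by rewrite g0 mulr0 (norm_pi_eq0 _ g0) mulmx0 -(scale0r (0 : 'cV_n)) norm_piZ normr0 mul0r.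
have g_gt0 : 0 < norm_pi pi g by rewrite lt0r g_neq0 norm_pi_ge0.
have g1 : norm_pi pi ((norm_pi pi g)^-1 *: g) = 1.
  by rewrite norm_piZ ger0_norm ?invr_ge0 ?norm_pi_ge0 // mulVf.
have := opnorm_pi_ub A _ g1.
by rewrite -scalemxAr norm_piZ ger0_norm ?invr_ge0 ?norm_pi_ge0 // ler_pdivrMl // mulrC.
Qed.

Lemma opnorm_pi_mulmx_le A B : opnorm_pi pi (A *m B) <= opnorm_pi pi A * opnorm_pi pi B.
Proof.
apply: opnorm_pi_le => f f1; rewrite -mulmxA.
apply: le_trans (norm_pi_mulmx_le _ _) _.
by rewrite ler_wpM2l ?opnorm_pi_ge0 // -[X in _ <= X]mulr1 -f1 norm_pi_mulmx_le.
Qed.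

Section Adjoint.
Variables B Bs : 'M[R]_n.
Hypothesis BBs : pi_adjoint B Bs.

Lemma sqr_opnorm_pi_le : opnorm_pi pi B ^+ 2 <= opnorm_pi pi (Bs *m B).
Proof.
have d0 := opnorm_pi_ge0 (Bs *m B).
suff : opnorm_pi pi B <= Num.sqrt (opnorm_pi pi (Bs *m B)).
  by rewrite -ler_sqr ?nnegrE ?opnorm_pi_ge0 ?sqrtr_ge0 // sqr_sqrtr.
apply: opnorm_pi_le => f f1.
rewrite -(ger0_norm (norm_pi_ge0 (B *m f))) -sqrtr_sqr ler_sqrt // sqr_norm_pi BBs.
apply: le_trans (dot_pi_le_norm _ _) _.
by rewrite f1 mul1r mulmxA opnorm_pi_ub.
Qed.

Lemma opnorm_pi_adjoint_mulmx_le : opnorm_pi pi (Bs *m B) <= opnorm_pi pi B ^+ 2.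
Proof.
apply: opnorm_pi_le => f f1; set c := opnorm_pi pi B; set v := Bs *m B *m f.
have Bf_le : norm_pi pi (B *m f) <= c by rewrite -[c]mulr1 -f1 norm_pi_mulmx_le.
have v_sqr_le : norm_pi pi v ^+ 2 <= c * norm_pi pi v * c.
  rewrite sqr_norm_pi {2}/v -mulmxA -BBs.
  apply: le_trans (dot_pi_le_norm _ _) _.
  by rewrite ler_pM ?norm_pi_ge0 ?norm_pi_mulmx_le.
have v0 := norm_pi_ge0 v.
have [->|v_neq0] := eqVneq (norm_pi pi v) 0; first exact: sqr_ge0.
have v_gt0 : 0 < norm_pi pi v by rewrite lt0r v_neq0.
by rewrite -(ler_pM2r v_gt0); move: v_sqr_le; rewrite !expr2; nra.
Qed.

Lemma opnorm_pi_adjoint_mulmx : opnorm_pi pi (Bs *m B) = opnorm_pi pi B ^+ 2.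
Proof. by apply/eqP; rewrite eq_le opnorm_pi_adjoint_mulmx_le sqr_opnorm_pi_le. Qed.

End Adjoint.

Lemma pi_adjoint_mxpow B Bs k : pi_adjoint B Bs -> pi_adjoint (mxpow B k) (mxpow Bs k).
Proof.
move=> BBs; elim: k => [|k IH] f g; first by rewrite /mxpow /= !mul1mx.
by rewrite mxpowSr -mulmxA IH BBs -mulmxA.
Qed.

Lemma pi_adjoint_centered (P : 'M[R]_n) :
  pi_adjoint (P - Pimx pi) (adjoint P pi - Pimx pi).
Proof.
move=> f g; rewrite /dot_pi.
transitivity (\sum_x \sum_y f y 0 * g x 0 * (pi 0 x * P x y - pi 0 x * pi 0 y)).
  apply: eq_bigr => x _; rewrite mxE !big_distrl /=.
  by apply: eq_bigr => y _; rewrite !mxE; ring.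
rewrite exchange_big /=; apply: eq_bigr => y _.
rewrite mxE big_distrr big_distrl /=; apply: eq_bigr => x _.
by rewrite !mxE; field; apply: lt0r_neq0.
Qed.

End WeightedL2.

Theorem mainTheorem3 (R : realType) (n : nat) (P : 'M[R]_n) (pi : 'rV[R]_n) :
  row_stochastic P -> primitive P ->
  stationary_distribution P pi -> (forall x, 0 < pi 0 x) ->
  forall r s : nat, (1 <= r)%N -> (1 <= s)%N ->
  let Ps := adjoint P pi - Pimx pi in
  let Pc := P - Pimx pi in
  opnorm_pi pi (mxpow Ps (r + s) *m mxpow Pc (r + s))
  <= opnorm_pi pi (mxpow Ps r *m mxpow Pc r) * opnorm_pi pi (mxpow Ps s *m mxpow Pc s).
Proof.
move=> _ _ [_ [pi_sum1 _]] pi_gt0 r s _ _; cbv zeta.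
set Ps := adjoint P pi - Pimx pi; set Pc := P - Pimx pi.
have opnorm_powers k : opnorm_pi pi (mxpow Ps k *m mxpow Pc k) = opnorm_pi pi (mxpow Pc k) ^+ 2.
  exact/opnorm_pi_adjoint_mulmx/pi_adjoint_mxpow/pi_adjoint_centered.
rewrite !opnorm_powers // -exprMn ler_sqr ?nnegrE ?mulr_ge0 ?opnorm_pi_ge0 //.
by rewrite mxpowD opnorm_pi_mulmx_le.
Qed.
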